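(* Let $F$ be a field containing a primitive cube root of unity $q$. Let $L=F[x]/(x^3)$, graded by $\mathbb Z_3$ with $\deg x^k=k\bmod 3$, in the category of $\mathbb Z_3$-graded vector spaces with braiding $C(a\otimes b)=r(|b|,|a|)\,b\otimes a$, where $r(k,m)=q^{km}$, and with bracket $[a,b]=ab-r(|b|,|a|)\,ba$ for homogeneous $a,b$. Then $(L,[\ \,])$ is a braided m-Lie algebra and a (left) Jacobi braided Lie algebra, but it is not a strict Jacobi braided Lie algebra (the braided anti-symmetry $[\ \,]=-[\ \,]C_{L,L}$ fails), and there is no coalgebra structure $(\Delta,\varepsilon)$ on $L$ in this category making $(L,\Delta,\varepsilon,[\ \,])$ a (left) braided Lie algebra in the sense of Majid.
   Context: Braided m-Lie algebra: an object $L$ with morphism $[\ \,]:L\otimes L\to L$ such that there are an algebra $(A,m)$ in the category and a monomorphism $\phi:L\to A$ with $\phi[\ \,]=m(\phi\otimes\phi)-m(\phi\otimes\phi)C_{L,L}$. (BJI): with $C=C_{L,L}$, $[\ \,](L\otimes[\ \,]) + [\ \,](L\otimes[\ \,])(L\otimes C^{-1})(C\otimes L) + [\ \,](L\otimes[\ \,])(C^{-1}\otimes L)(L\otimes C) = 0$. A (left) Jacobi braided Lie algebra satisfies (BJI); a (left) strict Jacobi braided Lie algebra satisfies both (BJI) and (BAS): $[\ \,]=-[\ \,]C_{L,L}$. Majid's (left) braided Lie algebra: a coalgebra $(L,\Delta,\varepsilon)$ in the category (degree-preserving, coassociative, counital, with $F$ in degree $0$) with a morphism $[\ \,]$ such that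 (L1) $[\ \,](L\otimes[\ \,]) = [\ \,]([\ \,]\otimes[\ \,])(L\otimes C\otimes L)(\Delta\otimes L\otimes L)$; (L2) $C([\ \,]\otimes L)(L\otimes C)(\Delta\otimes L) = (L\otimes[\ \,])(\Delta\otimes L)$; (L3) $\Delta[\ \,] = ([\ \,]\otimes[\ \,])(L\otimes C\otimes L)(\Delta\otimes\Delta)$ and $\varepsilon[\ \,]=\varepsilon\otimes\varepsilon$. *)

From HB Require Import structures.
From mathcomp Require Import all_boot all_order all_algebra.

Set Implicit Arguments.
Unset Strict Implicit.
Unset Printing Implicit Defensive.

Import GRing.Theory.
Local Open Scope ring_scope.

(* L = F[x]/(x^3) has basis x^0, x^1, x^2 indexed by 'I_3, with deg x^k = k.
   L^{(x)n} has basis x^{i1} (x) ... (x) x^{in}, indexed by n-tuples of 'I_3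
   (L^{(x)0} = F, the unit object, in degree 0).
   A linear map f : L^{(x)n} -> L^{(x)m} is represented by its matrix
   coefficients: f b c = coefficient of the basis tensor c in f(b).
   We use seq-indexed coefficient functions; only the values on tuples of
   the right lengths matter (see [eqm]). *)

Section BraidedLie.
Variable F : fieldType.
Variable q : F.

Definition mor := seq 'I_3 -> seq 'I_3 -> F.

Definition eqm (n m : nat) (f g : mor) : Prop :=
  forall (b : n.-tuple 'I_3) (c : m.-tuple 'I_3), f b c = g b c.

Definition idm : mor := fun b c => (b == c)%:R.

Definition comp (k : nat) (g f : mor) : mor :=
  fun b d => \sum_(c : k.-tuple 'I_3) f b c * g c d.

Definition tensm (n1 m1 : nat) (f g : mor) : mor :=
  fun b c => f (take n1 b) (take m1 c) * g (drop n1 b) (drop m1 c).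

Definition degt (s : seq 'I_3) : nat := (\sum_(i <- s) (i : nat))%N %% 3.

Definition homog (n m : nat) (f : mor) : Prop :=
  forall (b : n.-tuple 'I_3) (c : m.-tuple 'I_3), f b c != 0 -> degt b = degt c.

Definition rq (k m : 'I_3) : F := q ^+ (k * m).

Definition braid : mor := fun b c =>
  match b, c with
  | [:: i; j], [:: k; l] => ((k == j) && (l == i))%:R * rq j i
  | _, _ => 0
  end.

Definition braid_inv : mor := fun b c =>
  match b, c with
  | [:: i; j], [:: k; l] => ((k == j) && (l == i))%:R * (rq i j)^-1
  | _, _ => 0
  end.

(* multiplication of F[x]/(x^3): x^i x^j = x^(i+j) if i+j < 3, else 0 *)
Definition mulL : mor := fun b c =>
  match b, c with
  | [:: i; j], [:: k] => ((i + j)%N == k)%:R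
  | _, _ => 0
  end.

Definition brL : mor := fun b c => mulL b c - comp 2 mulL braid b c.

Definition graded_algebra (A : algType F) (G : 'I_3 -> A -> Prop) : Prop :=
  [/\ forall k, G k 0 /\ (forall (c : F) (a b : A), G k a -> G k b -> G k (c *: a + b)),
      forall a : A, exists f : 'I_3 -> A, (forall k, G k (f k)) /\ a = \sum_k f k,
      forall f : 'I_3 -> A, (forall k, G k (f k)) -> \sum_k f k = 0 -> forall k, f k = 0,
      G 0%R 1
    & forall (k l : 'I_3) (a b : A), G k a -> G l b -> G (k + l)%R (a * b)].

(* (L, br) is a braided m-Lie algebra: there are an algebra (A, m) in the
   category and a monomorphism phi : L -> A (given by the images phi k of the
   basis vectors x^k) with phi [ ] = m (phi (x) phi) - m (phi (x) phi) C_{L,L};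
   the last identity is checked on the basis tensors x^i (x) x^j. *)
Definition braided_mLie (br : mor) : Prop :=
  homog 2 1 br /\
  exists (A : algType F) (G : 'I_3 -> A -> Prop) (phi : 'I_3 -> A),
    [/\ graded_algebra G,
        forall k, G k (phi k),
        injective (fun c : {ffun 'I_3 -> F} => \sum_k c k *: phi k)
      & forall i j : 'I_3,
          \sum_k br [:: i; j] [:: k] *: phi k
          = \sum_(c : 2.-tuple 'I_3) idm [:: i; j] c *: (phi (tnth c 0) * phi (tnth c 1))
          - \sum_(c : 2.-tuple 'I_3) braid [:: i; j] c *: (phi (tnth c 0) * phi (tnth c 1))].

Definition BJI (br : mor) : Prop :=
  let T := comp 2 br (tensm 1 1 idm br) in
  eqm 3 1 (fun b c =>
      T b c
    + comp 3 T (comp 3 (tensm 1 1 idm braid_inv) (tensm 2 2 braid idm)) b c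
    + comp 3 T (comp 3 (tensm 2 2 braid_inv idm) (tensm 1 1 idm braid)) b c)
    (fun _ _ => 0).

Definition BAS (br : mor) : Prop :=
  eqm 2 1 br (fun b c => - comp 2 br braid b c).

Definition jacobi_braided_Lie (br : mor) : Prop := homog 2 1 br /\ BJI br.

Definition strict_jacobi_braided_Lie (br : mor) : Prop :=
  homog 2 1 br /\ BJI br /\ BAS br.

Definition majid_braided_Lie (Delta eps br : mor) : Prop :=
  [/\ [/\ homog 1 2 Delta, homog 1 0 eps & homog 2 1 br],
      [/\ eqm 1 3 (comp 2 (tensm 1 2 Delta idm) Delta) (comp 2 (tensm 1 1 idm Delta) Delta),
           eqm 1 1 (comp 2 (tensm 1 0 eps idm) Delta) idm
         & eqm 1 1 (comp 2 (tensm 1 1 idm eps) Delta) idm],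
      eqm 3 1 (comp 2 br (tensm 1 1 idm br))
        (comp 2 br (comp 4 (tensm 2 1 br br)
           (comp 4 (tensm 1 1 idm (tensm 2 2 braid idm)) (tensm 1 2 Delta idm)))),
      eqm 2 2 (comp 2 braid (comp 3 (tensm 2 1 br idm)
                 (comp 3 (tensm 1 1 idm braid) (tensm 1 2 Delta idm))))
        (comp 3 (tensm 1 1 idm br) (tensm 1 2 Delta idm))
    &
      eqm 2 2 (comp 1 Delta br)
        (comp 4 (tensm 2 1 br br)
           (comp 4 (tensm 1 1 idm (tensm 2 2 braid idm)) (tensm 1 2 Delta Delta)))
      /\ eqm 2 0 (comp 1 eps br) (tensm 1 0 eps eps)].

End BraidedLie.

From Pilot Require Import Defs.
From HB Require Import structures.
From mathcomp Require Import all_boot all_order all_algebra.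
From mathcomp Require Import zify.

Set Implicit Arguments.
Unset Strict Implicit.
Unset Printing Implicit Defensive.
Import GRing.Theory.
Local Open Scope ring_scope.

(* On basis vectors [x^i, x^j] = (1 - q^(ij)) x^(i+j), which vanishes unless
   i = j = 1; so the only nonzero bracket is [x, x] = (1 - q) x^2.  Hence every
   double bracket is 0 and (BJI) holds trivially, while (BAS) at x (x) x reads
   1 - q = -q (1 - q), i.e. q = -1, contradicting q^2 <> 1.  The realisation
   of L sends x^k to N^k, N the nilpotent 3x3 shift matrix, in M_3(F) graded by
   cyclic superdiagonals.  Finally [1, 1] = 0 and eps [ ] = eps (x) eps force
   eps(1) = 0, while eps has degree 0 and so kills x and x^2 too: the counit
   axiom cannot hold. *)

Lemma sum_kronecker (V : nmodType) (I : finType) (i : I) (g : I -> V) :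
  \sum_j g j *+ (j == i) = g i.
Proof. by rewrite (bigD1 i) //= eqxx mulr1n big1 ?addr0 // => j /negbTE ->. Qed.

Lemma sum_ord_kronecker (V : nmodType) (g : nat -> V) (m n : nat) :
  (forall k, (m <= k)%N -> g k = 0) -> \sum_(i < m) g i *+ (i == n :> nat) = g n.
Proof.
move=> g_out; have [n_lt_m | m_le_n] := ltnP n m.
  rewrite (bigD1 (Ordinal n_lt_m)) //= eqxx mulr1n big1 ?addr0 // => i.
  by rewrite -val_eqE /= => /negbTE ->.
rewrite g_out // big1 // => i _.
by rewrite (_ : (i == n :> nat) = false) //; apply/eqP; have := ltn_ord i; lia.
Qed.

Section ShiftMatrix.
Variable F : fieldType.

Definition shiftmx : 'M[F]_3 := \matrix_(a, b) ((b : nat) == a.+1)%:R.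

Lemma shiftmx_expE n a b : (shiftmx ^+ n) a b = ((b : nat) == a + n)%N%:R.
Proof.
elim: n a b => [|n IHn] a b; first by rewrite expr0 !mxE addn0 eq_sym.
rewrite exprS -mulmxE mxE.
under eq_bigr do rewrite IHn mxE mulr_natl.
rewrite (@sum_ord_kronecker _ (fun k => ((b : nat) == k + n)%N%:R)) ?addSnnS //.
move=> k k_ge3.
by rewrite (_ : ((b : nat) == k + n)%N = false) //; have := ltn_ord b; lia.
Qed.

Lemma shiftmx_exp_ge3 n : (3 <= n)%N -> shiftmx ^+ n = 0.
Proof.
move=> n_ge3; apply/matrixP => a b; rewrite shiftmx_expE !mxE.
by rewrite (_ : ((b : nat) == a + n)%N = false) //; have := ltn_ord b; lia.
Qed.

Lemma sum_shiftmx_exp_kronecker n :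
  \sum_(k < 3) ((n == k :> nat)%:R : F) *: shiftmx ^+ k = shiftmx ^+ n.
Proof.
under eq_bigr do rewrite scaler_nat eq_sym.
by rewrite sum_ord_kronecker // => k; apply: shiftmx_exp_ge3.
Qed.

Lemma row0_sum_shiftmx_exp (c : 'I_3 -> F) k :
  (\sum_l c l *: shiftmx ^+ l) ord0 k = c k.
Proof.
rewrite summxE.
under eq_bigr do rewrite mxE shiftmx_expE add0n val_eqE mulr_natr eq_sym.
exact: sum_kronecker.
Qed.

(* [a + k] is computed in ['I_3], i.e. modulo 3. *)
Definition mx_homog (k : 'I_3) (A : 'M[F]_3) : Prop :=
  forall a b : 'I_3, b != a + k -> A a b = 0.

Definition mx_homog_part (k : 'I_3) (A : 'M[F]_3) : 'M[F]_3 :=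
  \matrix_(a, b) ((b == a + k)%:R * A a b).

Lemma mx_homog_partP k A : mx_homog k (mx_homog_part k A).
Proof. by move=> a b /negbTE b_ne; rewrite mxE b_ne mul0r. Qed.

Lemma sum_mx_homog_part A : \sum_k mx_homog_part k A = A.
Proof.
apply/matrixP => a b; rewrite summxE.
under eq_bigr => k _ do rewrite mxE addrC -subr_eq eq_sym mulr_natl.
exact: sum_kronecker.
Qed.

Lemma mx_graded_algebra : graded_algebra (A := 'M[F]_3) mx_homog.
Proof.
split.
- move=> k; split=> [a b _ | c A B A_k B_k a b b_ne]; rewrite !mxE //.
  by rewrite A_k // B_k // mulr0 addr0.
- move=> A; exists (mx_homog_part^~ A); split=> [k | ].
    exact: mx_homog_partP.
  by rewrite sum_mx_homog_part.
- move=> f f_homog f_sum0 k; apply/matrixP => a b; rewrite mxE.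
  have [b_ak | /f_homog //] := eqVneq b (a + k).
  have := congr1 (fun M : 'M[F]_3 => M a b) f_sum0; rewrite /= summxE mxE.
  rewrite (bigD1 k) //= big1 ?addr0 // => l l_ne_k; apply: f_homog; rewrite b_ak.
  by apply: contra l_ne_k => /eqP/addrI ->.
- by move=> a b; rewrite mxE addr0 eq_sym => /negbTE ->.
- move=> k l A B A_k B_l a b b_ne; rewrite -mulmxE mxE big1 // => c _.
  have [c_ak | /A_k -> ] := eqVneq c (a + k); last by rewrite mul0r.
  by rewrite B_l ?mulr0 // c_ak -addrA.
Qed.

Lemma shiftmx_exp_homog (k : 'I_3) : mx_homog k (shiftmx ^+ k).
Proof.
move=> a b b_ne; rewrite shiftmx_expE; case: eqP => // b_ak.
by case/eqP: b_ne; apply: val_inj; rewrite /= -b_ak modn_small.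
Qed.
End ShiftMatrix.

Section BracketOfL.
Variables (F : fieldType) (q : F).

Lemma braid_tuple2 (i j : 'I_3) (c : 2.-tuple 'I_3) :
  braid q [:: i; j] c = (c == [tuple j; i])%:R * rq q j i.
Proof.
case: c => [[|x [|y [|? ?]]] //= hc].
by rewrite -[_ == [tuple _; _]]val_eqE /= !eqseq_cons andbT.
Qed.

Lemma idm_tuple2 (i j : 'I_3) (c : 2.-tuple 'I_3) :
  idm F [:: i; j] c = (c == [tuple i; j])%:R.
Proof. by rewrite /idm eq_sym -val_eqE. Qed.

Lemma comp2_braid (f : mor F) (i j : 'I_3) d :
  Defs.comp 2 f (braid q) [:: i; j] d = rq q j i * f [:: j; i] d.
Proof.
rewrite /Defs.comp; under eq_bigr do rewrite braid_tuple2 -mulrA mulr_natl.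
by rewrite sum_kronecker.
Qed.

Lemma brL_basis (i j k : 'I_3) :
  brL q [:: i; j] [:: k] = ((i + j)%N == k)%:R * (1 - q ^+ (j * i)).
Proof. by rewrite /brL comp2_braid /= /rq addnC mulrBr mulr1 mulrC. Qed.

Lemma brL_shape s t : brL q s t != 0 -> exists i j k, s = [:: i; j] /\ t = [:: k].
Proof.
case: s t => [|i [|j [|? ?]]] [|k [|? ?]] nz; try by exists i, j, k.
all: move: nz; rewrite /brL /Defs.comp big1 ?subr0 ?eqxx // => c _.
all: by case: c => [[|? [|? [|? ?]]] //= hc]; rewrite ?mul0r ?mulr0.
Qed.

Lemma brL_support s t : brL q s t != 0 ->
  exists i j k : 'I_3, [/\ s = [:: i; j], t = [:: k]
    & [/\ i = 1%N :> nat, j = 1%N :> nat & k = 2%N :> nat]].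
Proof.
move=> /[dup] /brL_shape [i [j [k [-> ->]]]].
rewrite brL_basis; have [ijk | _] := eqVneq (i + j)%N k; last by rewrite mul0r eqxx.
rewrite mul1r subr_eq0 eq_sym => q_ji; exists i, j, k; split => //.
have i_gt0 : (0 < i)%N by case: posnP q_ji => // ->; rewrite muln0 eqxx.
have j_gt0 : (0 < j)%N by case: posnP q_ji => // ->; rewrite mul0n eqxx.
by have := ltn_ord k; split; lia.
Qed.

Lemma homog_brL : homog 2 1 (brL q).
Proof.
move=> b c /brL_support [i [j [k [-> -> [i1 j1 k2]]]]].
by rewrite /degt !big_cons !big_nil i1 j1 k2.
Qed.

Lemma comp_eq0l k (g f : mor F) : (forall c d, g c d = 0) ->
  forall b d, Defs.comp k g f b d = 0.
Proof. by move=> g0 b d; rewrite /Defs.comp big1 // => c _; rewrite g0 mulr0. Qed.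

Lemma brL_brL_eq0 b d : Defs.comp 2 (brL q) (tensm 1 1 (idm F) (brL q)) b d = 0.
Proof.
rewrite /Defs.comp big1 // => c _.
have [-> | /brL_support [i [j [k [-> _ [_ j1 _]]]]]] := eqVneq (brL q c d) 0.
  by rewrite mulr0.
rewrite /tensm /=; have [-> | /brL_support [? [? [k' [_ [<-] [_ _ k'2]]]]]] :=
  eqVneq (brL q (drop 1 b) [:: j]) 0; first by rewrite !mulr0 mul0r.
by move: k'2; rewrite j1.
Qed.

Lemma BJI_brL : BJI q (brL q).
Proof. by move=> b c /=; rewrite !(comp_eq0l _ _ brL_brL_eq0) brL_brL_eq0 !addr0. Qed.

Lemma brL_not_BAS : 3.-primitive_root q -> ~ BAS q (brL q).
Proof.
move=> q_prim BAS_L; pose x1 : 'I_3 := inord 1; pose x2 : 'I_3 := inord 2.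
have q_neq1 : q != 1 by rewrite -[q]expr1 -(prim_order_dvd q_prim 1).
have q2_neq1 : q ^+ 2 != 1 by rewrite -(prim_order_dvd q_prim 2).
have := BAS_L [tuple x1; x1] [tuple x2].
rewrite /= comp2_braid !brL_basis /rq !inordK //=.
rewrite !mul1r expr1 => /eqP; rewrite -addr_eq0 -{1}[1 - q]mul1r -mulrDl mulf_eq0.
rewrite subr_eq0 [1 == q]eq_sym (negbTE q_neq1) orbF addr_eq0 => /eqP one_eq_Nq.
by move: q2_neq1; rewrite -sqrrN -one_eq_Nq expr1n eqxx.
Qed.

Lemma counit_brL_eq0 (eps : mor F) : homog 1 0 eps ->
  eqm 2 0 (Defs.comp 1 eps (brL q)) (tensm 1 0 eps eps) ->
  forall k, eps [:: k] [::] = 0.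
Proof.
move=> eps_homog eps_br k.
have eps_x0 : eps [:: ord0] [::] = 0.
  have := eps_br [tuple ord0; ord0] [tuple].
  rewrite /tensm /Defs.comp /= big1 => [|c _].
    by move/esym/eqP; rewrite mulf_eq0 orbb => /eqP.
  by case: c => [[|k' [|? ?]] //= hc]; rewrite brL_basis expr0 subrr !mulr0 mul0r.
have [// | /(eps_homog [tuple k] [tuple])] := eqVneq (eps [:: k] [::]) 0.
rewrite /degt /= !big_cons !big_nil addn0 modn_small // => k0.
by rewrite (_ : k = ord0) //; apply: val_inj.
Qed.

Lemma no_majid_brL : ~ exists Delta eps : mor F, majid_braided_Lie q Delta eps (brL q).
Proof.
move=> [Delta [eps [[_ eps_homog _] [_ counitL _] _ _ [_ eps_br]]]].
have eps0 := counit_brL_eq0 eps_homog eps_br.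
have := counitL [tuple ord0] [tuple ord0].
rewrite /Defs.comp /idm /= big1 => [|c _].
  by move/eqP; rewrite eq_sym oner_eq0.
by case: c => [[|? [|? [|? ?]]] //= hc]; rewrite /tensm /= eps0 !mul0r mulr0.
Qed.

Lemma sum_braid_tuple2 (V : lmodType F) (g : 2.-tuple 'I_3 -> V) (i j : 'I_3) :
  \sum_(c : 2.-tuple 'I_3) braid q [:: i; j] c *: g c = rq q j i *: g [tuple j; i].
Proof.
under eq_bigr do rewrite braid_tuple2 mulrC -scalerA scaler_nat.
by rewrite -scaler_sumr sum_kronecker.
Qed.

Lemma sum_idm_tuple2 (V : lmodType F) (g : 2.-tuple 'I_3 -> V) (i j : 'I_3) :
  \sum_(c : 2.-tuple 'I_3) idm F [:: i; j] c *: g c = g [tuple i; j].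
Proof. by under eq_bigr do rewrite idm_tuple2 scaler_nat; exact: sum_kronecker. Qed.

Lemma braided_mLie_brL : braided_mLie q (brL q).
Proof.
split; first exact: homog_brL.
exists 'M[F]_3, (@mx_homog F), (fun k => shiftmx F ^+ k); split.
- exact: mx_graded_algebra.
- exact: shiftmx_exp_homog.
- move=> c c' /= c_c'; apply/ffunP => k.
  by rewrite -[c k]row0_sum_shiftmx_exp -[c' k]row0_sum_shiftmx_exp c_c'.
- move=> i j; rewrite sum_idm_tuple2 sum_braid_tuple2 -!exprD /rq /= [(j + i)%N]addnC.
  under eq_bigr do rewrite brL_basis mulrC -scalerA.
  by rewrite -scaler_sumr sum_shiftmx_exp_kronecker scalerBl scale1r.
Qed.
End BracketOfL.

Theorem mainTheorem5 (F : fieldType) (q : F) (hq : (3.-primitive_root q)%R) :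
  [/\ braided_mLie q (brL q),
      jacobi_braided_Lie q (brL q),
      ~ strict_jacobi_braided_Lie q (brL q),
      ~ BAS q (brL q)
    & ~ (exists Delta eps : mor F, majid_braided_Lie q Delta eps (brL q))].
Proof.
split.
- exact: braided_mLie_brL.
- by split; [exact: homog_brL | exact: BJI_brL].
- by move=> [_ [_ BAS_L]]; exact: brL_not_BAS hq BAS_L.
- exact: brL_not_BAS.
- exact: no_majid_brL.
Qed.
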